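(* Let $X$ be a $\mu$-space. Then $X$ has a fundamental compact resolution if and only if $L_p(X)$ has a fundamental bounded resolution.
   Context: A $\mu$-space is a Tychonoff space in which every functionally bounded subset (one on which every continuous real function is bounded) is relatively compact. $L(X)$ is the free locally convex space over $X$ (the vector space with Hamel basis $X$, identified with the dual of $C_p(X)$, the continuous real functions on $X$ with the pointwise topology), and $L_p(X)$ denotes $L(X)$ with the weak topology $\sigma(L(X),C(X))$, i.e. the weak* dual of $C_p(X)$. Order $\mathbb{N}^{\mathbb{N}}$ pointwise. A fundamental compact resolution of $X$ is a family $\{K_\alpha:\alpha\in\mathbb{N}^{\mathbb{N}}\}$ of compact sets covering $X$ with $K_\alpha\subseteq K_\beta$ for $\alpha\le\beta$ such that every compact subset of $X$ lies in some $K_\alpha$. A fundamental bounded resolution of a locally convex space $F$ is a family of bounded sets with the same monotonicity, covering $F$, such that every bounded subset of $F$ lies in some member. *)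

From HB Require Import structures.
From mathcomp Require Import all_boot all_order all_algebra.
From mathcomp Require Import all_classical all_reals all_analysis.
From mathcomp Require Import Rstruct Rstruct_topology.
Set Implicit Arguments. Unset Strict Implicit. Unset Printing Implicit Defensive.
Import Order.TTheory GRing.Theory Num.Theory.
Local Open Scope classical_set_scope.
Local Open Scope ring_scope.

Notation realR := Rdefinitions.R.

Definition completely_regular (X : topologicalType) : Prop :=
  forall (a : X) (B : set X), closed B -> ~ B a ->
    exists f : X -> realR, continuous f /\ f a = 0 /\ (forall b, B b -> f b = 1).

Definition tychonoff (X : topologicalType) : Prop :=
  hausdorff_space X /\ completely_regular X.

Definition functionally_bounded (X : topologicalType) (A : set X) : Prop :=
  forall f : X -> realR, continuous f ->
    exists M : realR, forall x, A x -> `|f x| <= M.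

Definition relatively_compact (X : topologicalType) (A : set X) : Prop :=
  compact (closure A).

Definition mu_space (X : topologicalType) : Prop :=
  tychonoff X /\
  forall A : set X, functionally_bounded A -> relatively_compact A.

Definition le_baire (a b : nat -> nat) : Prop := forall n, (a n <= b n)%N.

Definition fundamental_compact_resolution (X : topologicalType)
    (K : (nat -> nat) -> set X) : Prop :=
  [/\ (forall a, compact (K a)),
      (forall a b, le_baire a b -> K a `<=` K b),
      (forall x : X, exists a, K a x) &
      (forall C : set X, compact C -> exists a, C `<=` K a)].

(** L(X): finite formal real linear combinations of points of X,
    i.e. finitely supported functions X -> R (Hamel basis X). *)
Definition LX (X : topologicalType) : Type :=
  {c : X -> realR | finite_set [set x | c x != 0]}.

Definition Lpair (X : topologicalType) (chi : LX X) (f : X -> realR) : realR :=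
  \sum_(x \in [set: X]) (proj1_sig chi x * f x).

(** Bounded subsets of L_p(X) = (L(X), sigma(L(X), C(X))): the weak topology
    is generated by the seminorms chi |-> |<chi,f>|, f in C(X), so a set is
    bounded iff each of these seminorms is bounded on it. *)
Definition Lp_bounded (X : topologicalType) (B : set (LX X)) : Prop :=
  forall f : X -> realR, continuous f ->
    exists M : realR, forall chi, B chi -> `|Lpair chi f| <= M.

Definition Lp_fundamental_bounded_resolution (X : topologicalType)
    (B : (nat -> nat) -> set (LX X)) : Prop :=
  [/\ (forall a, Lp_bounded (B a)),
      (forall a b, le_baire a b -> B a `<=` B b),
      (forall chi : LX X, exists a, B a chi) &
      (forall D : set (LX X), Lp_bounded D -> exists a, D `<=` B a)].

(* If K is a fundamental compact resolution, let B_a be the set of chi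
   supported in K_(a_1, a_2, ...) with |<chi, f>| <= a_0 whenever f is
   continuous and |f| <= 1 on that compact set.  A bounded D in L_p(X) lies in
   some B_a because the union of the supports of D is functionally bounded,
   hence relatively compact in the mu-space X, and because D is uniformly
   bounded on the continuous functions with values in [-1, 1].  Both facts are
   proved by a gliding hump: if either failed, one could build a continuous f
   at which D is unbounded.  Conversely, if B is a fundamental bounded
   resolution, the closures of {x | delta_x in B_a} are functionally bounded,
   hence compact, and they swallow every compact C since {delta_x | x in C} is
   bounded. *)

From mathcomp Require Import all_boot all_order all_algebra.
From mathcomp Require Import all_classical all_reals all_analysis.
From mathcomp Require Import Rstruct Rstruct_topology finmap.
From mathcomp Require Import ring lra.
Set Implicit Arguments. Unset Strict Implicit. Unset Printing Implicit Defensive.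
Import Order.TTheory GRing.Theory Num.Theory.
Local Open Scope classical_set_scope.
Local Open Scope ring_scope.

Section RealContinuity.
Variable X : topologicalType.
Implicit Types f g : X -> realR.

Lemma continuous_addR f g :
  continuous f -> continuous g -> continuous (fun x => f x + g x).
Proof.
by move=> cf cg x; exact: (@continuousD _ realR^o _ f g x (cf x) (cg x)).
Qed.

Lemma continuous_mulR f g :
  continuous f -> continuous g -> continuous (fun x => f x * g x).
Proof.
by move=> cf cg x; exact: (@cvgM _ _ _ _ f g (f x) (g x) (cf x) (cg x)).
Qed.

Lemma continuous_oppR f : continuous f -> continuous (fun x => - f x).
Proof. by move=> cf x; exact: (@continuousN _ realR^o _ f x (cf x)). Qed.

Lemma continuous_normR f : continuous f -> continuous (fun x => `|f x|).
Proof. by move=> cf x; exact: (@cvg_norm _ realR^o _ _ _ f (f x) (cf x)). Qed.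

Lemma continuous_maxR f g :
  continuous f -> continuous g -> continuous (fun x => Num.max (f x) (g x)).
Proof. by move=> cf cg x; exact: (@continuous_max _ _ f g x (cf x) (cg x)). Qed.

Lemma continuous_minR f g :
  continuous f -> continuous g -> continuous (fun x => Num.min (f x) (g x)).
Proof. by move=> cf cg x; exact: (@continuous_min _ _ f g x (cf x) (cg x)). Qed.

Lemma continuous_clamp1 f : continuous f ->
  exists2 g : X -> realR, continuous g /\ (forall x, `|g x| <= 1) &
    forall x, `|f x| <= 1 -> g x = f x.
Proof.
move=> cf; exists (fun x => Num.max (-1) (Num.min 1 (f x))); first split.
- by apply: continuous_maxR => //; [exact: cst_continuous |
    apply: continuous_minR => //; exact: cst_continuous].
- move=> x; rewrite ler_norml le_max lexx ge_max ge_min lexx /=.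
  by rewrite andbT; lra.
- move=> x; rewrite ler_norml => /andP[f1 f2].
  by rewrite (min_idPr f2) (max_idPr f1).
Qed.

Lemma compact_norm_bounded (A : set X) f : compact A -> continuous f ->
  exists2 M, 0 < M & forall x, A x -> `|f x| <= M.
Proof.
move=> cA cf.
have := @compact_bounded realR realR^o _
  (continuous_compact (continuous_subspaceT cf) cA).
move=> /pinfty_ex_gt0 [M M0 HM]; exists M => // x Ax.
by apply: (HM (f x)); exists x.
Qed.

End RealContinuity.

Section FreeSpace.
Variable X : topologicalType.
Implicit Types (chi : LX X) (f g : X -> realR).

Definition supp chi : set X := [set x | sval chi x != 0].

Definition fsupp chi : {fset X} := fset_set (supp chi).

Lemma in_fsupp chi x : (x \in fsupp chi) = (sval chi x != 0).
Proof.
rewrite /fsupp in_fset_set; last exact: (svalP chi).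
by apply/idP/idP => [/set_mem | /mem_set].
Qed.

Lemma LpairE chi f : Lpair chi f = \sum_(x <- fsupp chi) sval chi x * f x.
Proof.
rewrite /Lpair -(fsbig_widen (supp chi) setT) // ?fsbig_finite //.
  exact: (svalP chi).
by move=> x [_ /negP]; rewrite negbK /= => /eqP ->; rewrite mul0r.
Qed.

Lemma eq_Lpair chi f g : {in supp chi, f =1 g} -> Lpair chi f = Lpair chi g.
Proof.
move=> fg; rewrite !LpairE; apply: eq_big_seq => x.
by rewrite in_fsupp => chix; rewrite fg //; exact: mem_set.
Qed.

Lemma LpairD chi f g :
  Lpair chi (fun x => f x + g x) = Lpair chi f + Lpair chi g.
Proof. by rewrite !LpairE -big_split; apply: eq_bigr => x _; rewrite mulrDr. Qed.

Lemma LpairZ chi c f : Lpair chi (fun x => c * f x) = c * Lpair chi f.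
Proof. by rewrite !LpairE mulr_sumr; apply: eq_bigr => x _; rewrite mulrCA. Qed.

Definition Lnorm1 chi : realR := \sum_(x <- fsupp chi) `|sval chi x|.

Lemma Lnorm1_ge0 chi : 0 <= Lnorm1 chi.
Proof. exact: sumr_ge0. Qed.

Lemma ler_norm_Lpair chi f m : {in supp chi, forall x, `|f x| <= m} ->
  `|Lpair chi f| <= Lnorm1 chi * m.
Proof.
move=> fm; rewrite LpairE /Lnorm1 mulr_suml.
apply: le_trans (ler_norm_sum _ _ _) _.
rewrite big_seq_cond [leRHS]big_seq_cond; apply: ler_sum => x.
rewrite andbT in_fsupp => chix; rewrite normrM ler_wpM2l // fm //.
exact: mem_set.
Qed.

Lemma finite_delta (x : X) : finite_set [set y | (y == x)%:R != 0 :> realR].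
Proof.
apply: (sub_finite_set _ (finite_set1 x)) => y /=.
by case: (y =P x); rewrite ?eqxx.
Qed.

Definition Ldelta (x : X) : LX X :=
  exist _ (fun y => (y == x)%:R) (finite_delta x).

Lemma Lpair_delta x f : Lpair (Ldelta x) f = f x.
Proof.
rewrite /Lpair -(fsbig_widen [set x] setT) //.
  by rewrite fsbig_set1 /= eqxx mul1r.
by move=> y [_ /= /eqP/negbTE ->]; rewrite mul0r.
Qed.

End FreeSpace.

Lemma eventually_constant (T : Type) (u : nat -> T) n :
  (forall j, (n <= j)%N -> u j.+1 = u j) -> forall m, (n <= m)%N -> u m = u n.
Proof.
move=> uS m /subnKC <-; elim: (m - n)%N => [|i IH]; first by rewrite addn0.
by rewrite addnS uS ?IH // leq_addr.
Qed.

Lemma halving_small (e : nat -> realR) : (forall n, e n.+1 <= e n / 2) ->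
  forall eps, 0 < eps -> exists N, e N < eps.
Proof.
move=> e_half eps eps0.
have e_geo n : e n <= e 0%N * (2^-1) ^+ n.
  elim: n => [|n IH]; first by rewrite expr0 mulr1.
  by rewrite exprSr mulrA; apply: le_trans (e_half n) _; rewrite ler_pM2r.
have half_lt1 : `|2^-1 : realR| < 1 by rewrite gtr0_norm ?invf_lt1 ?ltr1n.
have geo0 := @cvg_geometric realR (e 0%N) 2^-1 half_lt1.
have [N _ geoN] := @cvgr0_norm_lt _ realR^o _ _ _ _ geo0 _ eps0.
exists N; apply: le_lt_trans (e_geo N) _.
exact: le_lt_trans (ler_norm _) (geoN N (leqnn N)).
Qed.

Section FunctionLimits.
Variable X : topologicalType.

Lemma continuous_stationary_limit (h : nat -> X -> realR) (V : nat -> set X) :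
  (forall n, continuous (h n)) -> (forall n, open (V n)) ->
  (forall x, exists n, V n x) ->
  (forall n x, V n x -> forall m, (n <= m)%N -> h m x = h n x) ->
  exists2 f : X -> realR, continuous f & forall n x, V n x -> f x = h n x.
Proof.
move=> hc Vo Vcover hV.
pose f x := h (projT1 (cid (Vcover x))) x.
have fE n x : V n x -> f x = h n x.
  move=> Vnx; rewrite /f; case: cid => m Vmx /=.
  by rewrite -(hV m x Vmx (maxn m n)) ?leq_maxl // (hV n x Vnx) ?leq_maxr.
exists f => // x; have [n Vnx] := Vcover x.
rewrite /continuous_at (fE n x Vnx); apply: cvg_trans (hc n x).
apply: near_eq_cvg; apply: filterS (open_nbhs_nbhs (conj (Vo n) Vnx)).
by move=> y /fE.
Qed.

Lemma cauchy_uniform_limit (h : nat -> X -> realR) (d : nat -> realR) :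
  (forall n, continuous (h n)) ->
  (forall n m x, (n <= m)%N -> `|h m x - h n x| <= d n) ->
  (forall e, 0 < e -> exists N, d N < e) ->
  exists2 f : X -> realR, continuous f & forall n x, `|f x - h n x| <= d n.
Proof.
move=> hc hd d0.
have hcvg x : cvg (h ^~ x @ \oo).
  apply/(@cauchy_cvgP realR^o); apply: cauchy_exP => e e0.
  have [N dN] := d0 e e0; exists (h N x), N => // n /= Nn.
  by rewrite /ball /= distrC; exact: le_lt_trans (hd _ _ _ Nn) dN.
pose f x := lim (h ^~ x @ \oo).
have fh n x : `|f x - h n x| <= d n.
  apply/ler_addgt0Pr => e e0.
  have [M _ HM] := @cvgr_dist_lt _ realR^o _ _ _ (h^~ x) (f x) (hcvg x) _ e0.
  have /ltW fM := HM _ (leq_maxl M n); rewrite -/(f x) in fM.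
  rewrite -(subrK (h (maxn M n) x) (f x)) -addrA addrC.
  by apply: le_trans (ler_normD _ _) _; rewrite lerD // hd // leq_maxr.
exists f => // x; apply/(@cvgrPdist_lt _ realR^o) => e e0.
have e30 : 0 < e / 3 by rewrite divr_gt0.
have [N dN] := d0 _ e30.
near=> y.
have hNy : `|h N x - h N y| < e / 3.
  near: y.
  exact: (@cvgr_dist_lt _ realR^o _ _ _ (h N) (h N x) (hc N x) _ e30).
have := fh N x; have := fh N y; rewrite distrC => fhy fhx.
have -> : f x - f y = (f x - h N x) + (h N x - h N y) + (h N y - f y) by ring.
have := ler_normD (f x - h N x + (h N x - h N y)) (h N y - f y).
have := ler_normD (f x - h N x) (h N x - h N y).
lra.
Unshelve. all: by end_near.
Qed.

Lemma halving_uniform_limit (h : nat -> X -> realR) (e : nat -> realR) :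
  (forall n, continuous (h n)) -> (forall n, e n.+1 <= e n / 2) ->
  (forall n x, `|h n.+1 x - h n x| <= e n) ->
  exists2 f : X -> realR, continuous f & forall n x, `|f x - h n x| <= 2 * e n.
Proof.
move=> hc e_half hS; apply: cauchy_uniform_limit => // [n m x nm | eps eps0].
  have hD i : `|h (n + i)%N x - h n x| <= 2 * (e n - e (n + i)%N).
    elim: i => [|i IH]; first by rewrite addn0 !subrr normr0 mulr0.
    have := hS (n + i)%N x; have := e_half (n + i)%N; rewrite addnS.
    have -> : h (n + i).+1 x - h n x =
      (h (n + i).+1 x - h (n + i)%N x) + (h (n + i)%N x - h n x) by ring.
    have := ler_normD (h (n + i).+1 x - h (n + i)%N x) (h (n + i)%N x - h n x).
    lra.
  have := le_trans (normr_ge0 _) (hS m x); have := hD (m - n)%N.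
  rewrite subnKC //; lra.
have eps2 : 0 < eps / 2 by rewrite divr_gt0.
have [N eN] := halving_small e_half eps2.
by exists N; lra.
Qed.

End FunctionLimits.

Section UnitBallBound.
Variables (X : topologicalType) (D : set (LX X)).

Record glide := Glide {
  glide_sum : X -> realR; glide_eps : realR; glide_chi : LX X }.

(* The invariant is a premise so that the relation is total, as required by
   [dependent_choice]. *)
Definition glide_step (s s' : glide) :=
  continuous (glide_sum s) /\ 0 < glide_eps s ->
  exists2 f : X -> realR, continuous f /\ (forall x, `|f x| <= 1) &
  [/\ D (glide_chi s'),
      glide_sum s' = (fun x => glide_sum s x + glide_eps s * f x),
      0 < glide_eps s' /\ glide_eps s' <= glide_eps s / 2,
      2 * glide_eps s' * Lnorm1 (glide_chi s') <= 1 &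
      `|Lpair (glide_chi s') (glide_sum s)| + (glide_eps s)^-1 + 1 <
        glide_eps s * `|Lpair (glide_chi s') f|].

Lemma glide_step_total : Lp_bounded D ->
  (forall M, exists chi (f : X -> realR),
    [/\ D chi, continuous f, (forall x, `|f x| <= 1) & M < `|Lpair chi f|]) ->
  forall s, exists s', glide_step s s'.
Proof.
move=> bD big [h e chi0].
have [[hc e0]|inv] := pselect (continuous h /\ 0 < e); last first.
  by exists (Glide h e chi0) => /inv.
have [B HB] := bD _ hc.
have [chi [f [Dchi cf f1 large]]] := big ((B + e^-1 + 1) / e).
have L0 := Lnorm1_ge0 chi.
pose e' := Num.min (e / 2) (2 * (Lnorm1 chi + 1))^-1.
have e'0 : 0 < e' by rewrite lt_min !(divr_gt0, invr_gt0, mulr_gt0) //; lra.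
exists (Glide (fun x => h x + e * f x) e' chi) => _.
exists f => //=; split => //.
- by split=> //; rewrite ge_min lexx.
- have : e' <= (2 * (Lnorm1 chi + 1))^-1 by rewrite ge_min lexx orbT.
  by rewrite -[leRHS]div1r ler_pdivlMr; [nra | lra].
- by have := HB chi Dchi; rewrite ltr_pdivrMr // in large; lra.
Qed.

(* The tail of the series moves [Lpair chi_(k+1)] by at most 1, while the
   k-th term makes it exceed [1 / eps_k]. *)
Lemma glide_not_bounded (s : nat -> glide) :
  continuous (glide_sum (s 0%N)) -> 0 < glide_eps (s 0%N) ->
  (forall k, glide_step (s k) (s k.+1)) -> ~ Lp_bounded D.
Proof.
move=> hc0 e0 sS bD.
have inv k : continuous (glide_sum (s k)) /\ 0 < glide_eps (s k).
  elim: k => [|k [hc e_gt0]] //.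
  have [f [cf _] [_ -> [? _] _ _]] := sS k (conj hc e_gt0); split=> //.
  apply: continuous_addR => //; apply: continuous_mulR => //.
  exact: cst_continuous.
pose h k := glide_sum (s k); pose e k := glide_eps (s k).
have e_half k : e k.+1 <= e k / 2.
  by have [f _ [_ _ [_ half] _ _]] := sS k (inv k).
have hS k x : `|h k.+1 x - h k x| <= e k.
  have [f [_ f1] [_ hk _ _ _]] := sS k (inv k).
  rewrite /h hk addrC addKr normrM gtr0_norm; last exact: (inv k).2.
  by rewrite -[leRHS]mulr1 ler_wpM2l // ltW // (inv k).2.
have [f cf fh] := halving_uniform_limit (fun k => (inv k).1) e_half hS.
have [M HM] := bD _ cf.
have M1 : 0 < (`|M| + 1)^-1 by rewrite invr_gt0 ltr_wpDl.
have [N eN] := halving_small e_half M1.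
have [g [cg g1] [DN hN [eN0 _] LN large]] := sS N (inv N).
set c := glide_chi (s N.+1) in DN LN large.
have tail : `|Lpair c (fun x => f x - h N.+1 x)| <= 1.
  apply: le_trans (ler_norm_Lpair (m := 2 * e N.+1) _) _ => [x _ | ].
    exact: fh.
  by rewrite mulrC.
have fE : Lpair c f =
    Lpair c (h N) + e N * Lpair c g + Lpair c (fun x => f x - h N.+1 x).
  by rewrite -LpairZ -!LpairD; apply: eq_Lpair => x _; rewrite /h /e hN; ring.
have invN : `|M| + 1 < (e N)^-1.
  by rewrite -[ltLHS]invrK ltf_pV2 ?posrE ?(inv N).2.
set r := Lpair c (fun x => f x - h N.+1 x) in tail fE.
have := ler_normD (Lpair c f - Lpair c (h N)) (- r).
have := ler_normB (Lpair c f) (Lpair c (h N)).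
rewrite normrN (_ : _ - _ + _ = e N * Lpair c g); last by rewrite fE; ring.
rewrite normrM gtr0_norm ?(inv N).2 //.
have := HM c DN; have := ler_norm M; rewrite /= -/(e N) in large *; lra.
Qed.

Lemma Lp_bounded_on_unit_ball : Lp_bounded D ->
  exists M : realR, forall chi (f : X -> realR), D chi ->
    continuous f -> (forall x, `|f x| <= 1) -> `|Lpair chi f| <= M.
Proof.
move=> bD; apply: contrapT => /forallNP unbounded.
have big M : exists chi (f : X -> realR),
    [/\ D chi, continuous f, (forall x, `|f x| <= 1) & M < `|Lpair chi f|].
  apply: contrapT => /forallNP none; apply: (unbounded M) => chi f Dchi cf f1.
  by rewrite leNgt; apply/negP => Mlt; apply: (none chi); exists f.
have [chi0 _] := big 0.
have [s [s0 sS]] := dependent_choice (fun s => cid (glide_step_total bD big s))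
  (Glide (fun=> 0) 1 chi0).
by apply: (glide_not_bounded _ _ sS) bD; rewrite s0 //; exact: cst_continuous.
Qed.

End UnitBallBound.

Section SupportBound.
Variable X : topologicalType.
Hypotheses (hX : hausdorff_space X) (crX : completely_regular X).

Lemma Lpair_bump (chi : LX X) (x : X) (U : set X) (t : realR) :
  open U -> U x -> sval chi x != 0 ->
  exists2 u : X -> realR, continuous u &
    (forall y, u y != 0 -> U y) /\ Lpair chi u = t.
Proof.
move=> oU Ux chix.
pose B := ~` U `|` (supp chi `\ x).
have clB : closed B.
  apply: closedU; first exact: open_closedC.
  exact: compact_closed hX (finite_compact (finite_setD _ (svalP chi))).
have nBx : ~ B x by case=> [/(_ Ux) | [_ /(_ erefl)]].
have [phi [cphi [phix phiB]]] := crX clB nBx.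
exists (fun y => t / sval chi x * (1 - phi y)).
  apply: continuous_mulR; first exact: cst_continuous.
  by apply: continuous_addR; [exact: cst_continuous | exact: continuous_oppR].
split=> [y|].
  by apply: contraNP => nUy; rewrite phiB ?subrr ?mulr0 //; left.
rewrite LpairE (bigD1_seq x) ?fset_uniq ?in_fsupp //= big_seq_cond big1 ?addr0.
  by rewrite phix subr0 mulr1 mulrC divfK.
move=> y /andP[]; rewrite in_fsupp => chiy yx.
by rewrite phiB ?subrr ?mulr0 ?mul0r //; right; split => //; exact/eqP.
Qed.

Record hump := Hump {
  hump_level : realR; hump_sum : X -> realR; hump_chi : LX X }.

(* Each increment of [hump_sum] lives where [G] exceeds the previous level,
   hence above [G] on all the supports chosen before: the sum is locally
   finite and stays fixed on each support once it is chosen. *)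
Definition hump_step (D : set (LX X)) (G : X -> realR) (s s' : hump) :=
  [/\ D (hump_chi s'),
      (hump_level s + 1 <= hump_level s') /\
        (forall y, supp (hump_chi s') y -> G y <= hump_level s'),
      continuous (hump_sum s) -> continuous (hump_sum s'),
      (forall y, G y <= hump_level s + 1 -> hump_sum s' y = hump_sum s y) &
      hump_level s < `|Lpair (hump_chi s') (hump_sum s')|].

Lemma hump_step_total D (G : X -> realR) : continuous G ->
  (forall b, exists2 chi, D chi & exists2 x, supp chi x & b < G x) ->
  forall s, exists s', hump_step D G s s'.
Proof.
move=> cG big [a h chi0].
have [chi Dchi [x chix Gx]] := big (a + 1).
have [M _ GM] := compact_norm_bounded (finite_compact (svalP chi)) cG.
have oG : open [set y | a + 1 < G y].
  exact: (@open_comp _ _ G _ (fun y _ => cG y) (@open_gt realR (a + 1))).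
have [u cu [uG Lu]] := Lpair_bump (`|Lpair chi h| + a + 1) oG Gx chix.
exists (Hump (Num.max (a + 1) M) (fun y => h y + u y) chi); split => //=.
- split=> [|y /GM Gy]; first by rewrite le_max lexx.
  by rewrite le_max (le_trans (ler_norm _) Gy) orbT.
- by move=> hc; exact: continuous_addR.
- move=> y Gy; have /eqP -> : u y == 0.
    by apply: contraTT Gy => /uG /= ?; rewrite -ltNge.
  by rewrite addr0.
- rewrite LpairD Lu; have := ler_norm (Lpair chi h + (`|Lpair chi h| + a + 1)).
  by have := ler_norm (- Lpair chi h); rewrite normrN; lra.
Qed.

Lemma hump_not_bounded D (G : X -> realR) (s : nat -> hump) : continuous G ->
  0 <= hump_level (s 0%N) -> continuous (hump_sum (s 0%N)) ->
  (forall k, hump_step D G (s k) (s k.+1)) -> ~ Lp_bounded D.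
Proof.
move=> cG a0 hc0 sS bD.
pose a k := hump_level (s k); pose h k := hump_sum (s k).
pose chi k := hump_chi (s k).
have a_ge k : k%:R <= a k.
  elim: k => // k IH; have [_ [+ _] _ _ _] := sS k.
  by rewrite -/(a k) -/(a k.+1) -natr1; apply: le_trans; rewrite lerD2r.
have a_mono : nondecreasing_seq a.
  apply/nondecreasing_seqP => k; have [_ [+ _] _ _ _] := sS k.
  by apply: le_trans; rewrite lerDl.
have hc k : continuous (h k).
  by elim: k => // k IH; have [_ _ + _ _] := sS k; apply.
have h_stable n y : (forall j, (n <= j)%N -> G y <= a j + 1) ->
    forall m, (n <= m)%N -> h m y = h n y.
  move=> Gy; apply: eventually_constant => j nj.
  by have [_ _ _ + _] := sS j; apply; exact: Gy.
have h_below n y : G y < n%:R -> forall m, (n <= m)%N -> h m y = h n y.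
  move=> Gy; apply: h_stable => j nj; have := a_ge j.
  have : n%:R <= j%:R :> realR by rewrite ler_nat.
  lra.
have h_supp k y : supp (chi k.+1) y ->
    forall m, (k.+1 <= m)%N -> h m y = h k.+1 y.
  move=> chiy; apply: h_stable => j kj; have := a_mono _ _ kj.
  by have [_ [_ /(_ y chiy)]] := sS k; rewrite -/(a k.+1); lra.
have [f cf fE] : exists2 f : X -> realR, continuous f &
    forall n y, G y < n%:R -> f y = h n y.
  apply: (continuous_stationary_limit hc) => [n | y | n y /h_below //].
    exact: (@open_comp _ _ G _ (fun y _ => cG y) (@open_lt realR n%:R)).
  by exists (Num.truncn (G y)).+1; exact: Num.Theory.truncnS_gt.
have [M HM] := bD _ cf.
have Mk := Num.Theory.truncnS_gt M; set k := (Num.truncn M).+1 in Mk.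
have [Dk _ _ _ large] := sS k.
have fk : {in supp (chi k.+1), f =1 h k.+1}.
  move=> y /set_mem chiy; pose n := (Num.truncn (G y)).+1.
  have Gn : G y < n%:R := Num.Theory.truncnS_gt (G y).
  rewrite (fE n y Gn) -(h_below n y Gn (maxn n k.+1)) ?leq_maxl //.
  by rewrite (h_supp k y chiy) ?leq_maxr.
have := HM _ Dk; rewrite (eq_Lpair fk) -/(chi k.+1).
have := a_ge k; rewrite -/(a k) -/(h k.+1) in large; lra.
Qed.

Lemma Lp_bounded_supp_functionally_bounded (D : set (LX X)) :
  Lp_bounded D -> functionally_bounded (\bigcup_(chi in D) supp chi).
Proof.
move=> bD g cg; apply: contrapT => /forallNP unbounded.
have big b : exists2 chi, D chi & exists2 x, supp chi x & b < `|g x|.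
  have /existsNP[x /not_implyP[[chi Dchi chix] /negP]] := unbounded b.
  by rewrite -ltNge => gx; exists chi => //; exists x.
have cG := continuous_normR cg.
have [chi0 _ _] := big 0.
have [s [s0 sS]] := dependent_choice (fun s => cid (hump_step_total cG big s))
  (Hump 0 (fun=> 0) chi0).
by apply: (hump_not_bounded cG _ _ sS) bD; rewrite s0 //; exact: cst_continuous.
Qed.

End SupportBound.

Section Resolutions.
Variable X : topologicalType.
Implicit Types (K C : set X) (D : set (LX X)) (f : X -> realR).

Definition Lp_ball K (r : nat) : set (LX X) :=
  [set chi | supp chi `<=` K /\ forall f, continuous f ->
    (forall x, K x -> `|f x| <= 1) -> `|Lpair chi f| <= r%:R].

Lemma Lp_ball_bounded K r : compact K -> Lp_bounded (Lp_ball K r).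
Proof.
move=> cK f cf; have [m m0 fm] := compact_norm_bounded cK cf.
exists (r%:R * m) => chi [_ chiK].
have /chiK : continuous (fun x => m^-1 * f x).
  by apply: continuous_mulR => //; exact: cst_continuous.
rewrite LpairZ normrM gtr0_norm ?invr_gt0 // ler_pdivrMl // mulrC; apply.
by move=> x Kx; rewrite normrM gtr0_norm ?invr_gt0 // ler_pdivrMl // mulr1 fm.
Qed.

Lemma Lp_ballS K K' r r' : K `<=` K' -> (r <= r')%N ->
  Lp_ball K r `<=` Lp_ball K' r'.
Proof.
move=> KK' rr' chi [chiK chir]; split=> [x /chiK /KK' // | f cf f1].
by apply: le_trans (chir f cf (fun x Kx => f1 x (KK' x Kx))) _; rewrite ler_nat.
Qed.

Lemma Lp_ball_Lnorm1 K r chi : supp chi `<=` K -> Lnorm1 chi <= r%:R ->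
  Lp_ball K r chi.
Proof.
move=> chiK chir; split=> // f _ f1; rewrite -[r%:R]mulr1.
apply: le_trans (ler_norm_Lpair (m := 1) _) _ => [x /set_mem /chiK /f1 //|].
by rewrite ler_pM2r.
Qed.

Lemma Lp_bounded_sub_Lp_ball K D : Lp_bounded D ->
  \bigcup_(chi in D) supp chi `<=` K -> exists r, D `<=` Lp_ball K r.
Proof.
move=> bD DK; have [M DM] := Lp_bounded_on_unit_ball bD.
exists (Num.truncn M).+1 => chi Dchi; split=> [x chix | f cf fK].
  by apply: DK; exists chi.
have [g [cg g1] gf] := continuous_clamp1 cf.
rewrite (@eq_Lpair _ _ f g) => [|x /set_mem chix]; last first.
  by rewrite gf // fK //; apply: DK; exists chi.
exact/ltW/(le_lt_trans (DM _ _ Dchi cg g1))/Num.Theory.truncnS_gt.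
Qed.

Definition bounded_resolution_of (K : (nat -> nat) -> set X) (a : nat -> nat) :=
  Lp_ball (K (fun n => a n.+1)) (a 0%N).

Definition baire_cons (m : nat) (b : nat -> nat) : nat -> nat :=
  fun n => if n is n'.+1 then b n' else m.

Lemma fundamental_bounded_of_compact (K : (nat -> nat) -> set X) :
  mu_space X -> fundamental_compact_resolution K ->
  Lp_fundamental_bounded_resolution (bounded_resolution_of K).
Proof.
move=> [[hX crX] muX] [Kc Kmono Kcover Kfund]; split.
- by move=> a; exact: Lp_ball_bounded.
- by move=> a b ab; apply: Lp_ballS => [|//]; apply: Kmono => n; exact: ab.
- move=> chi; have [b chib] := Kfund _ (finite_compact (svalP chi)).
  exists (baire_cons (Num.truncn (Lnorm1 chi)).+1 b).
  exact/Lp_ball_Lnorm1/ltW/Num.Theory.truncnS_gt.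
- move=> D bD.
  have /muX := Lp_bounded_supp_functionally_bounded hX crX bD.
  move=> /Kfund [b /(subset_trans (@subset_closure _ _)) Db].
  have [r Dr] := Lp_bounded_sub_Lp_ball bD Db.
  by exists (baire_cons r b).
Qed.

Definition compact_resolution_of (B : (nat -> nat) -> set (LX X))
    (a : nat -> nat) :=
  closure [set x | B a (Ldelta x)].

Lemma Lp_bounded_delta_functionally_bounded D : Lp_bounded D ->
  functionally_bounded [set x | D (Ldelta x)].
Proof.
move=> bD f cf; have [M DM] := bD f cf.
by exists M => x /DM; rewrite Lpair_delta.
Qed.

Lemma compact_Lp_bounded_delta C :
  compact C -> Lp_bounded [set Ldelta x | x in C].
Proof.
move=> cC f cf; have [M _ CM] := compact_norm_bounded cC cf.
by exists M => _ [x Cx <-]; rewrite Lpair_delta; exact: CM.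
Qed.

Lemma fundamental_compact_of_bounded (B : (nat -> nat) -> set (LX X)) :
  mu_space X -> Lp_fundamental_bounded_resolution B ->
  fundamental_compact_resolution (compact_resolution_of B).
Proof.
move=> [_ muX] [Bb Bmono Bcover Bfund]; split.
- by move=> a; apply/muX/Lp_bounded_delta_functionally_bounded.
- by move=> a b ab; apply: closureS => x; exact: Bmono.
- move=> x; have [a Ba] := Bcover (Ldelta x).
  by exists a; exact: subset_closure.
- move=> C /compact_Lp_bounded_delta /Bfund [a Ca].
  by exists a => x Cx; apply/subset_closure/Ca; exists x.
Qed.

End Resolutions.

Theorem proposition3p8 (X : topologicalType) (hX : mu_space X) :
  (exists K : (nat -> nat) -> set X, fundamental_compact_resolution K) <->
  (exists B : (nat -> nat) -> set (LX X), Lp_fundamental_bounded_resolution B).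
Proof.
split=> [[K resK] | [B resB]].
  by exists (bounded_resolution_of K); exact: fundamental_bounded_of_compact.
by exists (compact_resolution_of B); exact: fundamental_compact_of_bounded.
Qed.
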